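(* Let $n>2$ and $0<\epsilon<\frac{1}{n(n+1)}$. For $1\le i\le n-1$, let player $i$ have the uniform probability measure on the interval $(\frac in-\epsilon,\frac in+\epsilon)$ as valuation, and let player $n$ have the uniform (Lebesgue) valuation on $[0,1]$. Then: (a) in every envy-free complete connected division, all cut points lie in $\{\frac in: 1\le i\le n-1\}$ (each piece is of the form $(\frac{j-1}{n},\frac jn)$), player $n$ has utility exactly $\frac1n$, and each player $i\le n-1$ has utility exactly $\frac12$; (b) the partial division giving player $n$ the interval $(0,\frac1n)$, player 1 the interval $(\frac1n,\frac2n-2\epsilon)$, and each player $2\le i\le n-1$ the interval $\big(i(\frac1n-\epsilon),(i+1)(\frac1n-\epsilon)\big)$, and discarding the rest, is envy-free, gives player $n$ utility $\frac1n$, player 1 utility $\frac12$, and each player $2\le i\le n-1$ utility $1$.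
   Context: A (connected) division for players $1,\dots,n$ of the cake $[0,1]$ is a sequence $(X_1,\dots,X_n)$ of pairwise disjoint open intervals (possibly empty), $X_i$ being player $i$'s piece; it is complete if the union of the closures of the $X_i$ equals $[0,1]$, and partial otherwise. Each player $i$ has a valuation $v_i$, a nonatomic probability measure on $[0,1]$; $u_i(x,j)=v_i(X_j)$. A division is envy-free if $u_i(x,i)\ge u_i(x,j)$ for all $i,j$. *)

From Stdlib Require Import Reals Lra Lia Arith.
Open Scope R_scope.

(* A piece is an open interval (a,b) with 0 <= a <= b <= 1 (empty iff a = b).
   Pieces of players 1..n are given by endpoint functions a b : nat -> R. *)

Definition overlap (a b c d : R) : R := Rmax 0 (Rmin b d - Rmax a c).

Definition val (n : nat) (eps : R) (i : nat) (a b : R) : R :=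
  if Nat.eqb i n then overlap a b 0 1
  else overlap a b (INR i / INR n - eps) (INR i / INR n + eps) / (2 * eps).

Definition piece (a b : nat -> R) (j : nat) : R -> Prop :=
  fun x => a j < x < b j.

Definition in_closure (X : R -> Prop) (x : R) : Prop :=
  forall delta, 0 < delta -> exists y, X y /\ Rabs (y - x) < delta.

Definition is_division (n : nat) (a b : nat -> R) : Prop :=
  (forall j, (1 <= j <= n)%nat -> 0 <= a j <= b j /\ b j <= 1) /\
  (forall j k, (1 <= j <= n)%nat -> (1 <= k <= n)%nat -> j <> k ->
     forall x, ~ (piece a b j x /\ piece a b k x)).

Definition complete (n : nat) (a b : nat -> R) : Prop :=
  forall x, (0 <= x <= 1) <->
    (exists j, (1 <= j <= n)%nat /\ in_closure (piece a b j) x).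

Definition util (n : nat) (eps : R) (a b : nat -> R) (i j : nat) : R :=
  val n eps i (a j) (b j).

Definition envy_free (n : nat) (eps : R) (a b : nat -> R) : Prop :=
  forall i j, (1 <= i <= n)%nat -> (1 <= j <= n)%nat ->
    util n eps a b i j <= util n eps a b i i.

Definition a_part (n : nat) (eps : R) (j : nat) : R :=
  if Nat.eqb j n then 0
  else if Nat.eqb j 1 then 1 / INR n
  else INR j * (1 / INR n - eps).

Definition b_part (n : nat) (eps : R) (j : nat) : R :=
  if Nat.eqb j n then 1 / INR n
  else if Nat.eqb j 1 then 2 / INR n - 2 * eps
  else (INR j + 1) * (1 / INR n - eps).

From Stdlib Require Import Reals Lra Lia Arith List Classical ClassicalEpsilon.
Open Scope R_scope.

(* For (a): every player i < n values some piece meeting the window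
   W_i = (i/n - eps, i/n + eps), so by envy-freeness his own piece meets W_i.  Hence all
   pieces are nonempty, and a complete division into n nonempty intervals is a chain
   0 = c_0 < ... < c_n = 1.  Player n envies nobody, so his piece, at position p, is a
   longest one and has length L >= 1/n.  Since the windows are disjoint and ordered, the
   owners left of p are increasing, hence the left neighbour of p is owned by some
   q >= p - 1; that player does not envy the piece of player n only if c_(p-1) >= q/n.
   Symmetrically c_p <= p/n, so L = 1/n; then every piece has length at most 1/n, which
   forces c_k = k/n. *)

Ltac destruct_Rle := repeat match goal with
  | |- context [Rle_dec ?x ?y] => destruct (Rle_dec x y)
  | H : context [Rle_dec ?x ?y] |- _ => destruct (Rle_dec x y) end.
Ltac solve_overlap := unfold overlap, Rmax, Rmin in *; destruct_Rle; lra.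
Ltac solve_overlap_nra := unfold overlap, Rmax, Rmin in *; destruct_Rle; nra.

(** * Connected divisions *)

Lemma in_closure_piece a b j x :
  in_closure (piece a b j) x -> a j < b j /\ a j <= x <= b j.
Proof.
  intros H. destruct (H 1 Rlt_0_1) as [y [[Hy1 Hy2] _]]. split; [lra|]. split.
  - destruct (Rle_dec (a j) x); auto. exfalso.
    destruct (H (a j - x)) as [z [[Hz1 Hz2] Hz]]; [lra|]. apply Rabs_def2 in Hz. lra.
  - destruct (Rle_dec x (b j)); auto. exfalso.
    destruct (H (x - b j)) as [z [[Hz1 Hz2] Hz]]; [lra|]. apply Rabs_def2 in Hz. lra.
Qed.

Lemma division_separated n a b j k : is_division n a b ->
  (1 <= j <= n)%nat -> (1 <= k <= n)%nat -> j <> k -> a j < b j -> a k < b k ->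
  b j <= a k \/ b k <= a j.
Proof.
  intros [_ H] Hj Hk Hjk H1 H2.
  destruct (Rle_dec (b j) (a k)); auto. destruct (Rle_dec (b k) (a j)); auto. exfalso.
  apply (H j k Hj Hk Hjk ((Rmax (a j) (a k) + Rmin (b j) (b k)) / 2)).
  unfold piece, Rmax, Rmin; destruct_Rle; lra.
Qed.

Lemma gap_to_left_ends (n : nat) (a : nat -> R) x : exists d, 0 < d /\
  forall j, (1 <= j <= n)%nat -> x < a j -> x + d <= a j.
Proof.
  induction n as [|n [d [Hd IH]]].
  - exists 1. split; [lra|]. intros; lia.
  - destruct (Rlt_dec x (a (S n))).
    + exists (Rmin d (a (S n) - x)). split; [unfold Rmin; destruct Rle_dec; lra|].
      intros j Hj Hx. destruct (Nat.eq_dec j (S n)) as [->|Hne].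
      * unfold Rmin; destruct Rle_dec; lra.
      * pose proof (IH j ltac:(lia) Hx). unfold Rmin; destruct Rle_dec; lra.
    + exists d. split; auto. intros j Hj Hx.
      destruct (Nat.eq_dec j (S n)) as [->|Hne]; [lra|]. apply IH; auto; lia.
Qed.

Definition covers_right (n : nat) (a b : nat -> R) : Prop :=
  forall x, 0 <= x < 1 -> exists j, (1 <= j <= n)%nat /\ a j <= x < b j.

(* Points slightly to the right of [x] lie in a closure [a j, b j] with [a j <= x]. *)
Lemma complete_covers_right n a b : complete n a b -> covers_right n a b.
Proof.
  intros Hc x Hx. apply NNPP. intros Hno.
  destruct (gap_to_left_ends n a x) as [d [Hd Hg]].
  set (y := x + Rmin d (1 - x) / 2).
  assert (Hm : 0 < Rmin d (1 - x) <= d /\ Rmin d (1 - x) <= 1 - x)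
    by (unfold Rmin; destruct Rle_dec; lra).
  destruct (proj1 (Hc y) ltac:(unfold y; lra)) as [j [Hj Hcl]].
  apply in_closure_piece in Hcl. apply Hno. exists j. split; auto.
  destruct (Rle_dec (a j) x).
  - split; auto. destruct (Rlt_dec x (b j)); auto. exfalso.
    apply Hno. exists j. unfold y in Hcl. split; auto; lra.
  - exfalso. pose proof (Hg j Hj ltac:(lra)). unfold y in Hcl. lra.
Qed.

(** * Consecutive arrangement of the pieces *)

Section Chain.

Variables (n : nat) (a b : nat -> R).
Hypotheses (Hdiv : is_division n a b) (Hcov : covers_right n a b).

Definition next_piece (x : R) : nat :=
  epsilon (inhabits 0%nat) (fun j => (1 <= j <= n)%nat /\ a j <= x < b j).

(* [walk_cut k] is the right end of the k-th piece met when walking from 0 to the right;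
   it is meaningful only as long as the previous cuts are below 1. *)
Fixpoint walk_cut (k : nat) : R :=
  match k with O => 0 | S k' => b (next_piece (walk_cut k')) end.

Definition walk_piece (k : nat) : nat := next_piece (walk_cut (pred k)).

Lemma next_piece_spec x : 0 <= x < 1 ->
  (1 <= next_piece x <= n)%nat /\ a (next_piece x) <= x < b (next_piece x).
Proof. intros Hx. unfold next_piece. apply epsilon_spec. apply Hcov; auto. Qed.

Lemma walk_cuts_cover t' z : 0 <= z < walk_cut t' ->
  exists k, (1 <= k <= t')%nat /\ walk_cut (k - 1) <= z < walk_cut k.
Proof.
  induction t' as [|t' IH]; intros Hz; [simpl in Hz; lra|].
  destruct (Rlt_dec z (walk_cut t')).
  - destruct (IH ltac:(lra)) as [k [Hk Hz']]. exists k. split; auto; lia.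
  - exists (S t'). split; [lia|]. replace (S t' - 1)%nat with t' by lia. lra.
Qed.

Variable t : nat.
Hypothesis walk_below_one : forall k, (k < t)%nat -> walk_cut k < 1.

Lemma walk_cut_bounds k : (k <= t)%nat -> 0 <= walk_cut k <= 1.
Proof.
  induction k as [|k IH]; intros Hk; simpl; [lra|].
  assert (Hx : 0 <= walk_cut k < 1) by (split; [apply IH; lia | apply walk_below_one; lia]).
  destruct (next_piece_spec _ Hx) as [Hj _]. destruct (proj1 Hdiv _ Hj). lra.
Qed.

Lemma walk_piece_spec k : (1 <= k <= t)%nat ->
  (1 <= walk_piece k <= n)%nat /\ a (walk_piece k) <= walk_cut (k - 1) < b (walk_piece k) /\
  b (walk_piece k) = walk_cut k.
Proof.
  intros Hk. destruct k as [|k]; [lia|].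
  assert (Hx : 0 <= walk_cut k < 1)
    by (split; [apply walk_cut_bounds; lia | apply walk_below_one; lia]).
  unfold walk_piece. simpl pred. replace (S k - 1)%nat with k by lia.
  destruct (next_piece_spec _ Hx). auto.
Qed.

Lemma walk_cut_increasing k k' : (k < k' <= t)%nat -> walk_cut k < walk_cut k'.
Proof.
  intros Hk. induction k' as [|k' IH]; [lia|].
  destruct (walk_piece_spec (S k') ltac:(lia)) as (_ & H1 & H2).
  replace (S k' - 1)%nat with k' in H1 by lia.
  destruct (Nat.eq_dec k k') as [->|Hne]; [lra|]. pose proof (IH ltac:(lia)). lra.
Qed.

Lemma walk_piece_injective k k' : (1 <= k <= t)%nat -> (1 <= k' <= t)%nat ->
  walk_piece k = walk_piece k' -> k = k'.
Proof.
  intros Hk Hk' He.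
  destruct (walk_piece_spec k Hk) as (_ & _ & H1).
  destruct (walk_piece_spec k' Hk') as (_ & _ & H2).
  rewrite He in H1. destruct (Nat.lt_total k k') as [L|[E|L]]; auto.
  - pose proof (walk_cut_increasing k k' ltac:(lia)). lra.
  - pose proof (walk_cut_increasing k' k ltac:(lia)). lra.
Qed.

(* The k-th piece starts exactly at the previous cut: it cannot start at or before the
   left end of the (k-1)-th piece, which it does not overlap. *)
Lemma walk_piece_left_end k : (1 <= k <= t)%nat -> a (walk_piece k) = walk_cut (k - 1).
Proof.
  intros Hk. destruct (walk_piece_spec k Hk) as (Hs & H1 & H2).
  destruct (Nat.eq_dec k 1) as [->|Hk1]; [simpl in *; destruct (proj1 Hdiv _ Hs); lra|].
  destruct (walk_piece_spec (k - 1) ltac:(lia)) as (Hs' & H1' & H2').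
  assert (Hne : walk_piece (k - 1) <> walk_piece k)
    by (intros E; apply walk_piece_injective in E; lia).
  destruct (division_separated n a b _ _ Hdiv Hs' Hs Hne ltac:(lra) ltac:(lra)) as [E|E];
    [lra|].
  pose proof (walk_cut_increasing (k - 1) k ltac:(lia)). lra.
Qed.

End Chain.

Lemma injective_range_le (f : nat -> nat) t n :
  (forall k, (1 <= k <= t)%nat -> (1 <= f k <= n)%nat) ->
  (forall k k', (1 <= k <= t)%nat -> (1 <= k' <= t)%nat -> f k = f k' -> k = k') ->
  (t <= n)%nat.
Proof.
  intros H1 H2.
  assert (HL : (length (map f (seq 1 t)) <= length (seq 1 n))%nat).
  { apply NoDup_incl_length.
    - apply NoDup_map_NoDup_ForallPairs; [|apply seq_NoDup].
      intros x y Hx Hy. apply in_seq in Hx, Hy. apply H2; lia.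
    - intros y Hy. apply in_map_iff in Hy. destruct Hy as [x [<- Hx]].
      apply in_seq in Hx. apply in_seq. pose proof (H1 x ltac:(lia)). lia. }
  rewrite length_map, !length_seq in HL. auto.
Qed.

Lemma surjective_range_ge (f : nat -> nat) t n :
  (forall j, (1 <= j <= n)%nat -> exists k, (1 <= k <= t)%nat /\ f k = j) -> (n <= t)%nat.
Proof.
  intros H.
  assert (HL : (length (seq 1 n) <= length (map f (seq 1 t)))%nat).
  { apply NoDup_incl_length; [apply seq_NoDup|].
    intros y Hy. apply in_seq in Hy. destruct (H y ltac:(lia)) as [k [Hk E]].
    apply in_map_iff. exists k. split; auto. apply in_seq. lia. }
  rewrite length_map, !length_seq in HL. auto.
Qed.

(* The walk along the cuts visits distinct pieces, so it reaches 1 after at most n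
   steps. *)
Lemma walk_reaches_one n a b : is_division n a b -> covers_right n a b ->
  exists m, (m <= n)%nat /\ (forall k, (k < m)%nat -> walk_cut n a b k < 1) /\ walk_cut n a b m = 1.
Proof.
  intros Hd Hr.
  assert (Hbound : forall t, (forall k, (k < t)%nat -> walk_cut n a b k < 1) -> (t <= n)%nat).
  { intros t Ht. apply (injective_range_le (walk_piece n a b));
      [intros k Hk; apply (walk_piece_spec n a b Hd Hr t Ht k Hk)
      | apply (walk_piece_injective n a b Hd Hr t Ht)]. }
  assert (Hex : exists k, 1 <= walk_cut n a b k).
  { apply NNPP. intros Hno.
    assert (S n <= n)%nat; [|lia].
    apply Hbound. intros k _. apply Rnot_le_lt. intros H. apply Hno. eauto. }
  destruct (dec_inh_nat_subset_has_unique_least_element _ (fun k => classic _) Hex)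
    as [m [[Hm Hmin] _]].
  assert (Ht : forall k, (k < m)%nat -> walk_cut n a b k < 1).
  { intros k Hk. apply Rnot_le_lt. intros H. specialize (Hmin k H). lia. }
  exists m. split; [|split]; auto.
  pose proof (walk_cut_bounds n a b Hd Hr m Ht m (le_n _)). lra.
Qed.

(* Every nonempty piece is visited by the walk, so the walk takes exactly n steps. *)
Lemma complete_division_chain n a b : is_division n a b -> complete n a b ->
  (forall j, (1 <= j <= n)%nat -> a j < b j) ->
  exists (c : nat -> R) (s : nat -> nat), c O = 0 /\ c n = 1 /\
   (forall k, (1 <= k <= n)%nat -> (1 <= s k <= n)%nat /\ a (s k) = c (k - 1)%nat /\
       b (s k) = c k /\ c (k - 1)%nat < c k) /\
   (forall k k', (1 <= k <= n)%nat -> (1 <= k' <= n)%nat -> s k = s k' -> k = k') /\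
   (forall j, (1 <= j <= n)%nat -> exists k, (1 <= k <= n)%nat /\ s k = j).
Proof.
  intros Hd Hc Hne. pose proof (complete_covers_right n a b Hc) as Hr.
  destruct (walk_reaches_one n a b Hd Hr) as (m & Hmn & Ht & Hm1).
  assert (Hsurj : forall j, (1 <= j <= n)%nat ->
            exists k, (1 <= k <= m)%nat /\ walk_piece n a b k = j).
  { intros j Hj. pose proof (Hne j Hj). destruct (proj1 Hd j Hj).
    destruct (walk_cuts_cover n a b m ((a j + b j) / 2) ltac:(lra)) as [k [Hk Hz]].
    exists k. split; auto.
    destruct (walk_piece_spec n a b Hd Hr m Ht k Hk) as (Hs & _ & H2).
    pose proof (walk_piece_left_end n a b Hd Hr m Ht k Hk).
    destruct (Nat.eq_dec (walk_piece n a b k) j) as [E|Hne']; auto. exfalso.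
    destruct (division_separated n a b _ _ Hd Hs Hj Hne' ltac:(lra) ltac:(lra)); lra. }
  assert (n <= m)%nat by (apply (surjective_range_ge (walk_piece n a b)); auto).
  assert (m = n) by lia. subst m.
  exists (walk_cut n a b), (walk_piece n a b). split; [reflexivity|]. split; [exact Hm1|].
  split; [|split; [apply (walk_piece_injective n a b Hd Hr n Ht) | exact Hsurj]].
  intros k Hk. destruct (walk_piece_spec n a b Hd Hr n Ht k Hk) as (Hs & H1 & H2).
  pose proof (walk_piece_left_end n a b Hd Hr n Ht k Hk). repeat split; try lia; lra.
Qed.

(** * Valuations *)

Lemma val_player_n n eps x y : val n eps n x y = overlap x y 0 1.
Proof. unfold val. rewrite Nat.eqb_refl. reflexivity. Qed.

Lemma val_window n eps i x y : i <> n ->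
  val n eps i x y = overlap x y (INR i / INR n - eps) (INR i / INR n + eps) / (2 * eps).
Proof. intros H. unfold val. rewrite (proj2 (Nat.eqb_neq i n) H). reflexivity. Qed.

Lemma val_le_1 n eps i x y : 0 < eps -> i <> n -> val n eps i x y <= 1.
Proof.
  intros He Hi. rewrite val_window by auto.
  apply Rmult_le_reg_r with (2 * eps); [lra|].
  unfold Rdiv. rewrite Rmult_assoc, Rinv_l by lra. solve_overlap.
Qed.

Lemma envy_free_window n eps a b i j : envy_free n eps a b -> 0 < eps ->
  (1 <= i <= n)%nat -> (1 <= j <= n)%nat -> i <> n ->
  overlap (a j) (b j) (INR i / INR n - eps) (INR i / INR n + eps) <=
  overlap (a i) (b i) (INR i / INR n - eps) (INR i / INR n + eps).
Proof.
  intros Hef He Hi Hj Hin. pose proof (Hef i j Hi Hj) as H. unfold util in H.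
  rewrite !val_window in H by auto. unfold Rdiv at 1 3 in H.
  apply Rmult_le_reg_r in H; auto. apply Rinv_0_lt_compat; lra.
Qed.

Lemma envy_free_length_le n eps a b j : is_division n a b -> envy_free n eps a b ->
  (1 <= j <= n)%nat -> b j - a j <= b n - a n.
Proof.
  intros Hd Hef Hj. assert (Hn : (1 <= n <= n)%nat) by lia.
  pose proof (Hef n j Hn Hj) as H. unfold util in H. rewrite !val_player_n in H.
  destruct (proj1 Hd j Hj). destruct (proj1 Hd n Hn). solve_overlap.
Qed.

Lemma eps_bounds n eps : (2 < n)%nat -> 0 < eps -> eps < 1 / (INR n * (INR n + 1)) ->
  (INR n + 1) * eps < / INR n /\ 2 * eps < / INR n.
Proof.
  intros Hn He H.
  assert (H3 : 3 <= INR n) by (replace 3 with (INR 3) by (simpl; lra); apply le_INR; lia).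
  assert (Hp : 0 < INR n * (INR n + 1)) by nra.
  assert (Hm : eps * (INR n * (INR n + 1)) < 1).
  { apply Rmult_lt_compat_r with (r := INR n * (INR n + 1)) in H; auto.
    unfold Rdiv in H. rewrite Rmult_1_l, Rinv_l in H; lra. }
  assert (Hu : INR n * / INR n = 1) by (apply Rinv_r; lra).
  assert ((INR n + 1) * eps < / INR n) by nra.
  split; auto; nra.
Qed.

Lemma INR_pred_mul k u : (1 <= k)%nat -> INR (k - 1) * u = INR k * u - u.
Proof. intros H. rewrite minus_INR by lia. simpl. ring. Qed.

Lemma INR_mul_le u i j : 0 < u -> (j <= i)%nat -> INR j * u <= INR i * u.
Proof. intros Hu H. apply le_INR in H. nra. Qed.

Lemma INR_mul_step u i j : 0 < u -> (j + 1 <= i)%nat -> INR j * u + u <= INR i * u.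
Proof. intros Hu H. apply le_INR in H. rewrite plus_INR in H. simpl in H. nra. Qed.

(** * Envy-free complete divisions *)

Section EnvyFreeComplete.

Variables (n : nat) (eps : R) (a b : nat -> R).
Hypotheses (Hn : (2 < n)%nat) (Heps : 0 < eps)
  (Hdiv : is_division n a b) (Hcomp : complete n a b) (Hef : envy_free n eps a b).

Let Hn0 : 0 < INR n. Proof. apply lt_0_INR. lia. Qed.
Let Hu : 0 < / INR n. Proof. apply Rinv_0_lt_compat, Hn0. Qed.
Let Hnu : INR n * / INR n = 1. Proof. apply Rinv_r. lra. Qed.

(* The centre [i/n] of the window of player [i] lies in the closure of some piece, which
   then meets the window; by envy-freeness so does the piece of player [i]. *)
Lemma own_piece_meets_window i : (1 <= i <= n - 1)%nat ->
  a i < b i /\ a i < INR i / INR n + eps /\ INR i / INR n - eps < b i.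
Proof.
  intros Hi. set (x := INR i / INR n).
  assert (Hx : 0 <= x <= 1).
  { unfold x, Rdiv. rewrite <- Hnu. split.
    - apply Rmult_le_pos; [apply pos_INR | lra].
    - apply INR_mul_le; auto; lia. }
  destruct (proj1 (Hcomp x) Hx) as [j [Hj Hcl]]. apply in_closure_piece in Hcl.
  pose proof (envy_free_window n eps a b i j Hef Heps ltac:(lia) Hj ltac:(lia)) as E.
  fold x in E. solve_overlap.
Qed.

Lemma pieces_nonempty j : (1 <= j <= n)%nat -> a j < b j.
Proof.
  intros Hj. destruct (Nat.eq_dec j n) as [->|Hjn]; [|apply own_piece_meets_window; lia].
  destruct (proj1 (Hcomp (1 / 2)) ltac:(lra)) as [k [Hk Hcl]].
  apply in_closure_piece in Hcl. pose proof (envy_free_length_le n eps a b k Hdiv Hef Hk).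
  lra.
Qed.

End EnvyFreeComplete.

Section UniformCuts.

Variables (n : nat) (eps : R) (a b c : nat -> R) (s : nat -> nat) (p : nat).
Local Notation u := (/ INR n).
Hypotheses (Hn : (2 < n)%nat) (Heps : 0 < eps) (Hsmall : 2 * eps < u)
  (Hdiv : is_division n a b) (Hef : envy_free n eps a b)
  (Hwin : forall i, (1 <= i <= n - 1)%nat -> a i < INR i * u + eps /\ INR i * u - eps < b i)
  (Hc0 : c O = 0) (Hcn : c n = 1)
  (Hpos : forall k, (1 <= k <= n)%nat -> (1 <= s k <= n)%nat /\
     a (s k) = c (k - 1)%nat /\ b (s k) = c k /\ c (k - 1)%nat < c k)
  (Hinj : forall k k', (1 <= k <= n)%nat -> (1 <= k' <= n)%nat -> s k = s k' -> k = k')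
  (Hsurj : forall j, (1 <= j <= n)%nat -> exists k, (1 <= k <= n)%nat /\ s k = j)
  (Hp : (1 <= p <= n)%nat) (Hsp : s p = n).

Let Hu : 0 < u. Proof. lra. Qed.
Let Hnu : INR n * u = 1. Proof. apply Rinv_r. apply not_0_INR. lia. Qed.

Local Notation L := (c p - c (p - 1)%nat).

Lemma cut_monotone j k : (j <= k <= n)%nat -> c j <= c k.
Proof.
  intros Hjk. induction k as [|k IH]; [replace j with O by lia; lra|].
  destruct (Nat.eq_dec j (S k)) as [->|Hne]; [lra|].
  destruct (Hpos (S k) ltac:(lia)) as (_ & _ & _ & H). replace (S k - 1)%nat with k in H by lia.
  pose proof (IH ltac:(lia)). lra.
Qed.

Lemma piece_length_le k : (1 <= k <= n)%nat -> c k - c (k - 1)%nat <= L.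
Proof.
  intros Hk. destruct (Hpos k Hk) as (A & B & C & _). destruct (Hpos p Hp) as (_ & B' & C' & _).
  rewrite Hsp in B', C'. pose proof (envy_free_length_le n eps a b (s k) Hdiv Hef A). lra.
Qed.

Lemma cut_le_mul k : (k <= n)%nat -> c k <= INR k * L.
Proof.
  induction k as [|k IH]; intros Hk; [rewrite Hc0; simpl; lra|].
  pose proof (piece_length_le (S k) ltac:(lia)). replace (S k - 1)%nat with k in H by lia.
  rewrite S_INR. pose proof (IH ltac:(lia)). lra.
Qed.

Lemma cut_ge_mul d : (d <= n)%nat -> 1 - INR d * L <= c (n - d)%nat.
Proof.
  induction d as [|d IH]; intros Hd; [rewrite Nat.sub_0_r, Hcn; simpl; lra|].
  pose proof (piece_length_le (n - d) ltac:(lia)).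
  replace (n - d - 1)%nat with (n - S d)%nat in H by lia.
  rewrite S_INR. pose proof (IH ltac:(lia)). lra.
Qed.

Lemma length_player_n_ge : u <= L.
Proof. pose proof (cut_le_mul n (le_n _)). rewrite Hcn in H. nra. Qed.

Lemma owner_meets_window k : (1 <= k <= n)%nat -> k <> p ->
  (1 <= s k <= n - 1)%nat /\ c (k - 1)%nat < INR (s k) * u + eps /\ INR (s k) * u - eps < c k.
Proof.
  intros Hk Hkp. destruct (Hpos k Hk) as (A & B & C & _).
  assert (s k <> n) by (intros E; rewrite <- Hsp in E; apply Hinj in E; auto).
  destruct (Hwin (s k) ltac:(lia)). rewrite <- B, <- C. repeat split; auto; lia.
Qed.

(* The windows are disjoint and ordered from left to right, and so are the pieces. *)
Lemma owner_increasing k k' : (1 <= k)%nat -> (k < k' <= n)%nat -> k <> p -> k' <> p ->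
  (s k < s k')%nat.
Proof.
  intros Hk Hkk' Hkp Hk'p.
  destruct (owner_meets_window k ltac:(lia) Hkp) as (A & _ & C).
  destruct (owner_meets_window k' ltac:(lia) Hk'p) as (A' & B' & _).
  assert (s k <> s k') by (intros E; apply Hinj in E; lia).
  destruct (Nat.lt_ge_cases (s k) (s k')) as [Hlt|Hge]; auto. exfalso.
  pose proof (INR_mul_step u (s k) (s k') Hu ltac:(lia)).
  pose proof (cut_monotone k (k' - 1) ltac:(lia)). lra.
Qed.

Lemma owner_ge_left k : (1 <= k < p)%nat -> (k <= s k)%nat.
Proof.
  induction k as [|k IH]; intros Hk; [lia|].
  destruct (Nat.eq_dec k 0) as [->|Hk0].
  - destruct (owner_meets_window 1 ltac:(lia) ltac:(lia)). lia.
  - pose proof (IH ltac:(lia)).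
    pose proof (owner_increasing k (S k) ltac:(lia) ltac:(lia) ltac:(lia) ltac:(lia)). lia.
Qed.

Lemma owner_le_right k : (p < k <= n)%nat -> (s k <= k - 1)%nat.
Proof.
  intros Hk. remember (n - k)%nat as d. revert k Heqd Hk.
  induction d as [|d IH]; intros k Hd Hk.
  - replace k with n by lia. destruct (owner_meets_window n ltac:(lia) ltac:(lia)). lia.
  - pose proof (IH (S k) ltac:(lia) ltac:(lia)).
    pose proof (owner_increasing k (S k) ltac:(lia) ltac:(lia) ltac:(lia) ltac:(lia)). lia.
Qed.

(* The left neighbour [q] of player n would envy player n if [c (p-1) < q/n]: then the
   long piece of player n would cover the larger half of the window of [q]. *)
Lemma cut_left_of_player_n : INR (p - 1) * u <= c (p - 1)%nat.
Proof.
  destruct (Nat.eq_dec p 1) as [->|Hp1]; [simpl; rewrite Hc0; lra|].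
  set (q := s (p - 1)%nat).
  assert (Hq : (p - 1 <= q)%nat) by (apply owner_ge_left; lia).
  destruct (owner_meets_window (p - 1) ltac:(lia) ltac:(lia)) as (A & _ & C). fold q in A, C.
  destruct (Hpos (p - 1)%nat ltac:(lia)) as (_ & B1 & C1 & D1). fold q in B1, C1.
  destruct (Hpos p Hp) as (_ & B2 & C2 & _). rewrite Hsp in B2, C2.
  pose proof (envy_free_window n eps a b q n Hef Heps ltac:(lia) ltac:(lia) ltac:(lia)) as E.
  rewrite B1, C1, B2, C2 in E.
  pose proof (INR_mul_le u q (p - 1) Hu Hq) as Hqu. pose proof length_player_n_ge as HL.
  assert (INR q * u <= c (p - 1)%nat); [|lra].
  clear - E C D1 Hsmall Heps HL. solve_overlap.
Qed.

Lemma cut_right_of_player_n : c p <= INR p * u.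
Proof.
  destruct (Nat.eq_dec p n) as [->|Hpn]; [rewrite Hcn; lra|].
  set (q := s (p + 1)%nat).
  assert (Hq : (q <= p)%nat) by (pose proof (owner_le_right (p + 1) ltac:(lia)); unfold q; lia).
  destruct (owner_meets_window (p + 1) ltac:(lia) ltac:(lia)) as (A & B & _). fold q in A, B.
  replace (p + 1 - 1)%nat with p in B by lia.
  destruct (Hpos (p + 1)%nat ltac:(lia)) as (_ & B1 & C1 & D1). fold q in B1, C1.
  replace (p + 1 - 1)%nat with p in B1, D1 by lia.
  destruct (Hpos p Hp) as (_ & B2 & C2 & _). rewrite Hsp in B2, C2.
  pose proof (envy_free_window n eps a b q n Hef Heps ltac:(lia) ltac:(lia) ltac:(lia)) as E.
  rewrite B1, C1, B2, C2 in E.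
  pose proof (INR_mul_le u p q Hu Hq) as Hqu. pose proof length_player_n_ge as HL.
  assert (c p <= INR q * u); [|lra].
  clear - E B D1 Hsmall Heps HL. solve_overlap.
Qed.

Lemma length_player_n : L = u.
Proof.
  pose proof cut_left_of_player_n as Hl. pose proof cut_right_of_player_n.
  pose proof length_player_n_ge. rewrite INR_pred_mul in Hl by lia. lra.
Qed.

Lemma cuts_uniform k : (k <= n)%nat -> c k = INR k * u.
Proof.
  intros Hk. pose proof (cut_le_mul k Hk) as Hup. pose proof (cut_ge_mul (n - k) ltac:(lia)) as Hlo.
  replace (n - (n - k))%nat with k in Hlo by lia. rewrite minus_INR in Hlo by lia.
  rewrite length_player_n in Hup, Hlo. nra.
Qed.

Lemma pieces_on_grid k : (1 <= k <= n)%nat ->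
  exists j, (1 <= j <= n)%nat /\ a k = INR (j - 1) / INR n /\ b k = INR j / INR n.
Proof.
  intros Hk. destruct (Hsurj k Hk) as [j [Hj <-]]. exists j.
  destruct (Hpos j Hj) as (_ & B & C & _). rewrite B, C, !cuts_uniform by lia. auto.
Qed.

Lemma utility_player_n : util n eps a b n n = 1 / INR n.
Proof.
  destruct (Hpos p Hp) as (_ & B & C & _). rewrite Hsp in B, C.
  unfold util. rewrite val_player_n, B, C, !cuts_uniform, INR_pred_mul by lia.
  assert (0 <= INR p * u - u /\ INR p * u <= 1).
  { rewrite <- INR_pred_mul, <- Hnu by lia.
    split; [apply Rmult_le_pos; [apply pos_INR | lra] | apply INR_mul_le; auto; lia]. }
  unfold Rdiv. rewrite Rmult_1_l. solve_overlap.
Qed.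

(* A piece [((k-1)/n, k/n)] meets only the windows of [k - 1] and [k], each in a set of
   length [eps]. *)
Lemma utility_player_lt_n i : (1 <= i <= n - 1)%nat -> util n eps a b i i = 1 / 2.
Proof.
  intros Hi. destruct (Hsurj i ltac:(lia)) as [k [Hk <-]].
  assert (Hkp : k <> p) by (intros ->; lia).
  destruct (Hpos k Hk) as (_ & B & C & _).
  destruct (owner_meets_window k Hk Hkp) as (_ & Hl & Hr).
  rewrite !cuts_uniform, INR_pred_mul in Hl by lia. rewrite cuts_uniform in Hr by lia.
  unfold util. rewrite val_window by lia. rewrite B, C, !cuts_uniform, INR_pred_mul by lia.
  change (INR (s k) / INR n) with (INR (s k) * u).
  assert (Hov : overlap (INR k * u - u) (INR k * u) (INR (s k) * u - eps) (INR (s k) * u + eps)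
                = eps).
  { destruct (Nat.lt_ge_cases k (s k)) as [Hlt|Hge].
    - pose proof (INR_mul_step u (s k) k Hu ltac:(lia)). lra.
    - destruct (Nat.eq_dec k (s k)) as [E|E]; [rewrite <- E; solve_overlap|].
      destruct (Nat.eq_dec k (s k + 1)) as [E2|E2].
      + assert (HK : INR k = INR (s k) + 1) by (rewrite <- S_INR; f_equal; lia).
        assert (INR k * u = INR (s k) * u + u) by (rewrite HK; ring).
        solve_overlap.
      + pose proof (INR_mul_step u k (s k + 1) Hu ltac:(lia)).
        rewrite plus_INR in H. simpl in H. lra. }
  rewrite Hov. field. lra.
Qed.

End UniformCuts.

Lemma envy_free_complete_on_grid n eps a b :
  (2 < n)%nat -> 0 < eps -> 2 * eps < / INR n ->
  is_division n a b -> complete n a b -> envy_free n eps a b ->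
  (forall k, (1 <= k <= n)%nat ->
     exists j, (1 <= j <= n)%nat /\ a k = INR (j - 1) / INR n /\ b k = INR j / INR n) /\
  util n eps a b n n = 1 / INR n /\
  (forall i, (1 <= i <= n - 1)%nat -> util n eps a b i i = 1 / 2).
Proof.
  intros Hn He Hsmall Hd Hc Hef.
  destruct (complete_division_chain n a b Hd Hc (pieces_nonempty n eps a b Hn He Hd Hc Hef))
    as (c & s & Hc0 & Hcn & Hpos & Hinj & Hsurj).
  assert (Hwin := fun i Hi => proj2 (own_piece_meets_window n eps a b Hn He Hc Hef i Hi)).
  destruct (Hsurj n ltac:(lia)) as [p [Hp Hsp]].
  split; [|split].
  - exact (pieces_on_grid n eps a b c s p Hn He Hsmall Hd Hef Hwin Hc0 Hcn Hpos Hinj Hsurj Hp Hsp).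
  - exact (utility_player_n n eps a b c s p Hn He Hsmall Hd Hef Hwin Hc0 Hcn Hpos Hinj Hp Hsp).
  - exact (utility_player_lt_n n eps a b c s p Hn He Hsmall Hd Hef Hwin Hc0 Hcn Hpos Hinj
             Hsurj Hp Hsp).
Qed.

(** * The partial division of part (b) *)

Section PartialDivision.

Variables (n : nat) (eps : R).
Local Notation u := (/ INR n).
Hypotheses (Hn : (2 < n)%nat) (Heps : 0 < eps) (Hsmall : (INR n + 1) * eps < u).

Let Hn3 : 3 <= INR n. Proof. replace 3 with (INR 3) by (simpl; lra). apply le_INR. lia. Qed.
Let Hu : 0 < u. Proof. apply Rinv_0_lt_compat. lra. Qed.
Let Hgap : 4 * eps < u. Proof. nra. Qed.

Lemma a_part_n : a_part n eps n = 0.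
Proof. unfold a_part. rewrite Nat.eqb_refl. auto. Qed.

Lemma b_part_n : b_part n eps n = u.
Proof. unfold b_part. rewrite Nat.eqb_refl. unfold Rdiv. ring. Qed.

Lemma a_part_1 : a_part n eps 1 = u.
Proof. unfold a_part. rewrite (proj2 (Nat.eqb_neq 1 n)) by lia. simpl. unfold Rdiv. ring. Qed.

Lemma b_part_1 : b_part n eps 1 = 2 * (u - eps).
Proof. unfold b_part. rewrite (proj2 (Nat.eqb_neq 1 n)) by lia. simpl. unfold Rdiv. ring. Qed.

Lemma a_part_mid j : (2 <= j <= n - 1)%nat -> a_part n eps j = INR j * (u - eps).
Proof.
  intros Hj. unfold a_part. rewrite (proj2 (Nat.eqb_neq j n)), (proj2 (Nat.eqb_neq j 1)) by lia.
  unfold Rdiv. ring.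
Qed.

Lemma b_part_mid j : (2 <= j <= n - 1)%nat -> b_part n eps j = (INR j + 1) * (u - eps).
Proof.
  intros Hj. unfold b_part. rewrite (proj2 (Nat.eqb_neq j n)), (proj2 (Nat.eqb_neq j 1)) by lia.
  unfold Rdiv. ring.
Qed.

Lemma INR_mid j : (2 <= j <= n - 1)%nat -> 2 <= INR j /\ INR j + 1 <= INR n.
Proof.
  intros Hj. split.
  - replace 2 with (INR 2) by (simpl; lra). apply le_INR. lia.
  - rewrite <- S_INR. apply le_INR. lia.
Qed.

Ltac part_cases j :=
  destruct (Nat.eq_dec j n) as [->|?];
  [rewrite ?a_part_n, ?b_part_n
  | destruct (Nat.eq_dec j 1) as [->|?];
    [rewrite ?a_part_1, ?b_part_1
    | rewrite ?a_part_mid, ?b_part_mid by lia; destruct (INR_mid j ltac:(lia))]].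

Lemma part_bounds j : (1 <= j <= n)%nat ->
  0 <= a_part n eps j <= b_part n eps j /\ b_part n eps j <= 1.
Proof.
  intros Hj. assert (INR n * u = 1) by (apply Rinv_r; lra). part_cases j; nra.
Qed.

(* From left to right, the pieces belong to players n, 1, 2, ..., n - 1. *)
Lemma part_ordered j k : (1 <= j <= n)%nat -> (1 <= k <= n)%nat ->
  (j = n /\ k <> n) \/ (k <> n /\ (j < k)%nat) -> b_part n eps j <= a_part n eps k.
Proof.
  intros Hj Hk [[-> Hkn]|[Hkn Hjk]].
  - rewrite b_part_n. part_cases k; [lia | lra | nra].
  - rewrite a_part_mid by lia. destruct (INR_mid k ltac:(lia)).
    destruct (Nat.eq_dec j 1) as [->|Hj1]; [rewrite b_part_1; nra|].
    rewrite b_part_mid by lia.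
    assert (INR j + 1 <= INR k) by (rewrite <- S_INR; apply le_INR; lia). nra.
Qed.

Lemma part_is_division : is_division n (a_part n eps) (b_part n eps).
Proof.
  split; [exact part_bounds|].
  intros j k Hj Hk Hjk x [[A B] [C D]].
  assert (b_part n eps j <= a_part n eps k \/ b_part n eps k <= a_part n eps j) as [E|E];
    [|lra|lra].
  destruct (Nat.eq_dec j n); [left; apply part_ordered; auto; lia|].
  destruct (Nat.eq_dec k n); [right; apply part_ordered; auto; lia|].
  destruct (Nat.lt_ge_cases j k); [left|right]; apply part_ordered; auto; lia.
Qed.

Lemma part_not_complete : ~ complete n (a_part n eps) (b_part n eps).
Proof.
  intros Hc. destruct (proj1 (Hc 1) ltac:(lra)) as [j [Hj Hcl]].
  apply in_closure_piece in Hcl. assert (b_part n eps j < 1); [|lra].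
  assert (INR n * u = 1) by (apply Rinv_r; lra). part_cases j; nra.
Qed.

Lemma part_utility_n j : (1 <= j <= n)%nat ->
  util n eps (a_part n eps) (b_part n eps) n j = b_part n eps j - a_part n eps j.
Proof.
  intros Hj. unfold util. rewrite val_player_n.
  pose proof (part_bounds j Hj). solve_overlap.
Qed.

Lemma part_utility_1 : util n eps (a_part n eps) (b_part n eps) 1 1 = 1 / 2.
Proof.
  unfold util. rewrite val_window, a_part_1, b_part_1 by lia.
  change (INR 1 / INR n) with (1 * u).
  replace (overlap u (2 * (u - eps)) (1 * u - eps) (1 * u + eps)) with eps
    by solve_overlap_nra.
  field. lra.
Qed.

Lemma part_utility_mid i : (2 <= i <= n - 1)%nat ->
  util n eps (a_part n eps) (b_part n eps) i i = 1.
Proof.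
  intros Hi. destruct (INR_mid i Hi).
  unfold util. rewrite val_window, a_part_mid, b_part_mid by lia.
  change (INR i / INR n) with (INR i * u).
  replace (overlap (INR i * (u - eps)) ((INR i + 1) * (u - eps)) (INR i * u - eps)
             (INR i * u + eps)) with (2 * eps) by solve_overlap_nra.
  field. lra.
Qed.

Lemma part_envy_free : envy_free n eps (a_part n eps) (b_part n eps).
Proof.
  intros i j Hi Hj.
  destruct (Nat.eq_dec i n) as [->|Hin].
  { rewrite !part_utility_n by auto. rewrite a_part_n, b_part_n. part_cases j; lra. }
  destruct (Nat.eq_dec i 1) as [->|Hi1].
  2: { rewrite part_utility_mid by lia. apply val_le_1; auto. }
  rewrite part_utility_1. unfold util. rewrite val_window by lia.
  change (INR 1 / INR n) with (1 * u).
  apply Rmult_le_reg_r with (2 * eps); [lra|].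
  unfold Rdiv. rewrite Rmult_assoc, Rinv_l by lra.
  part_cases j; solve_overlap_nra.
Qed.

End PartialDivision.

Theorem mainTheorem13 (n : nat) (eps : R) :
  (2 < n)%nat -> 0 < eps -> eps < 1 / (INR n * (INR n + 1)) ->
  (* (a) *)
  (forall a b : nat -> R,
     is_division n a b -> complete n a b -> envy_free n eps a b ->
     (forall k, (1 <= k <= n)%nat ->
        exists j, (1 <= j <= n)%nat /\
          a k = INR (j - 1) / INR n /\ b k = INR j / INR n) /\
     util n eps a b n n = 1 / INR n /\
     (forall i, (1 <= i <= n - 1)%nat -> util n eps a b i i = 1 / 2)) /\
  (* (b) *)
  (is_division n (a_part n eps) (b_part n eps) /\
   ~ complete n (a_part n eps) (b_part n eps) /\
   envy_free n eps (a_part n eps) (b_part n eps) /\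
   util n eps (a_part n eps) (b_part n eps) n n = 1 / INR n /\
   util n eps (a_part n eps) (b_part n eps) 1 1 = 1 / 2 /\
   (forall i, (2 <= i <= n - 1)%nat ->
      util n eps (a_part n eps) (b_part n eps) i i = 1)).
Proof.
  intros Hn He Heps.
  destruct (eps_bounds n eps Hn He Heps) as [Hsmall H2eps].
  split; [intros a b; exact (envy_free_complete_on_grid n eps a b Hn He H2eps)|].
  split; [|split; [|split; [|split; [|split]]]].
  - exact (part_is_division n eps Hn He Hsmall).
  - exact (part_not_complete n eps Hn He Hsmall).
  - exact (part_envy_free n eps Hn He Hsmall).
  - rewrite part_utility_n, a_part_n, b_part_n by (auto; lia). unfold Rdiv. ring.
  - exact (part_utility_1 n eps Hn He Hsmall).
  - exact (part_utility_mid n eps Hn He Hsmall).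
Qed.
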